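(* Let $f$ be a nonsingular $m$-stage FSR. Suppose $c,d\in\Omega(f)$ (possibly $c=d$), $u\in\Omega_m(c)$ and $u'\in\Omega_m(d)$, where $u'=u\oplus(1,0,\dots,0)$. Then $\min\big(\Omega_m(c)\cup\Omega_m(d)\big)<\min\{u,u'\}$, or $u\in\{(0,0,\dots,0),(1,0,\dots,0)\}$.
   Context: An $m$-stage FSR with feedback logic $f_1:\{0,1\}^m\to\{0,1\}$ has state transformation $F(x_0,\dots,x_{m-1})=(x_1,\dots,x_{m-1},f_1(x_0,\dots,x_{m-1}))$ and generates the binary sequences $s:\mathbb Z\to\{0,1\}$ with $s(t+m)=f_1(s(t),\dots,s(t+m-1))$ for all $t$. It is nonsingular if $F$ is bijective (equivalently all generated sequences are periodic). A periodic sequence $s$ of (least) period $p$ determines the cycle $[s(0),\dots,s(p-1)]$ (all shifts of $s$ give the same cycle), of period $p$. The cycle structure $\Omega(f)$ is the set of cycles of sequences generated by $f$. For a cycle $c$ determined by $s$ with period $p$, $\Omega_k(c)=\{(s(i),s((i+1)\bmod p),\dots,s((i+k-1)\bmod p)): 0\le i<p\}\subseteq\{0,1\}^k$. A vector $(a_0,\dots,a_{m-1})\in\{0,1\}^m$ is identified with the integer $\sum_{j=0}^{m-1}2^ja_j$, which defines the order and $\min$ on $\{0,1\}^m$. *)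

From mathcomp Require Import all_boot all_algebra.
Set Implicit Arguments. Unset Strict Implicit. Unset Printing Implicit Defensive.

Notation state m := (m.-tuple bool).

Definition tnat m (x : state m) : nat := \sum_(j < m) 2 ^ j * tnth x j.

Definition FSR_F m (f1 : state m -> bool) (x : state m) : state m :=
  [tuple (if i.+1 < m then nth false x i.+1 else f1 x) | i < m].

Definition nonsingular m (f1 : state m -> bool) : Prop := bijective (FSR_F f1).

Definition generated m (f1 : state m -> bool) (s : int -> bool) : Prop :=
  forall t : int, s (t + Posz m)%R = f1 [tuple s (t + Posz i)%R | i < m].

Definition least_period (s : int -> bool) (p : nat) : Prop :=
  [/\ (0 < p)%N,
      (forall t : int, s (t + Posz p)%R = s t) &
      (forall q : nat, (0 < q < p)%N -> ~ (forall t : int, s (t + Posz q)%R = s t))].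

(* Omega_k(c) for the cycle c determined by s of (least) period p:
   {(s(i), s((i+1) mod p), ..., s((i+k-1) mod p)) : 0 <= i < p}. *)
Definition Omega (k : nat) (s : int -> bool) (p : nat) : {set k.-tuple bool} :=
  [set [tuple s (Posz ((i + j) %% p)%N) | j < k] | i : 'I_p].

Definition zero_state m : state m := [tuple false | i < m].
Definition e0 m : state m := [tuple (i == 0 :> nat) | i < m].
Definition xor_e0 m (u : state m) : state m :=
  [tuple (tnth u i (+) tnth (e0 m) i) | i < m].

(* Minimum (w.r.t. the integer identification) of a set of states;
   2^m (larger than every state value) is returned for the empty set. *)
Definition minval m (A : {set state m}) : nat :=
  \big[minn/2 ^ m]_(w in A) tnat w.

From mathcomp Require Import all_boot all_order all_algebra.
Set Implicit Arguments. Unset Strict Implicit. Unset Printing Implicit Defensive.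
Import Order.TTheory.

(* Write u = (b, x_1, ..., x_{m-1}), so u' = (~~ b, x_1, ..., x_{m-1}).  The
   states F u and F u' agree on their first m-1 coordinates, so injectivity
   of F forces f1 u != f1 u': one of them is the state z = (x_1, ..., x_{m-1}, 0),
   which lies in Omega_m(c) or Omega_m(d) since cycles are closed under F.
   If S is the value of (x_1, ..., x_{m-1}), then z has value S while u and u'
   have values b + 2S and ~~ b + 2S; hence z is strictly smaller than both
   unless S = 0, i.e. unless u is 0 or e0. *)

Definition window k (s : int -> bool) (i : nat) : k.-tuple bool :=
  [tuple s (Posz (i + j)) | j < k].

Section Windows.

Variables (k p : nat) (s : int -> bool).
Hypothesis p_gt0 : (0 < p)%N.
Hypothesis s_periodic : forall t : int, s (t + Posz p)%R = s t.

Lemma periodic_modn (n : nat) : s (Posz n) = s (Posz (n %% p)).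
Proof.
rewrite {1}(divn_eq n p); elim: (n %/ p) => [|d IHd]; first by rewrite add0n.
by rewrite mulSnr -addnAC PoszD s_periodic.
Qed.

Lemma window_modn (i : nat) : window k s (i %% p) = window k s i.
Proof.
apply: eq_from_tnth => j; rewrite !tnth_mktuple.
by rewrite periodic_modn modnDml -periodic_modn.
Qed.

Lemma Omega_windowE : Omega k s p = [set window k s i | i : 'I_p].
Proof.
by apply: eq_imset => i; apply: eq_mktuple => j; rewrite -periodic_modn.
Qed.

Lemma window_in_Omega (i : nat) : window k s i \in Omega k s p.
Proof.
rewrite Omega_windowE -window_modn.
exact: (imset_f _ (_ : Ordinal (ltn_pmod i p_gt0) \in _)).
Qed.

End Windows.

Lemma FSR_F_window m (f1 : state m -> bool) (s : int -> bool) (i : nat) :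
  generated f1 s -> FSR_F f1 (window m s i) = window m s i.+1.
Proof.
move=> s_gen; apply: eq_from_tnth => j; rewrite !tnth_mktuple.
case: ifP => [lt_j1m | /negbT].
  by rewrite -(tnth_nth false _ (Ordinal lt_j1m)) tnth_mktuple addnS.
rewrite -leqNgt => m_le_j1.
have j1m : j.+1 = m by apply/eqP; rewrite eqn_leq ltn_ord m_le_j1.
have -> : window m s i = [tuple s (Posz i + Posz j')%R | j' < m].
  by apply: eq_mktuple => j'; rewrite PoszD.
by rewrite -s_gen -PoszD addSnnS j1m.
Qed.

Lemma Omega_FSR_F m (f1 : state m -> bool) (s : int -> bool) p (u : state m) :
  generated f1 s -> least_period s p ->
  u \in Omega m s p -> FSR_F f1 u \in Omega m s p.
Proof.
move=> s_gen [p_gt0 s_per _]; rewrite Omega_windowE // => /imsetP [i _ ->].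
by rewrite FSR_F_window // -Omega_windowE // window_in_Omega.
Qed.

Lemma minval_le m (A : {set state m}) (w : state m) : w \in A -> minval A <= tnat w.
Proof. by move=> wA; rewrite /minval -minEnat -leEnat; apply: bigmin_le_cond. Qed.

Lemma tnat_cons n (b : bool) (x : state n) : tnat [tuple of b :: x] = b + 2 * tnat x.
Proof.
rewrite /tnat big_ord_recl expn0 mul1n big_distrr; congr (_ + _).
by apply: eq_bigr => j _; rewrite tnthS expnS -mulnA.
Qed.

Lemma tnat_eq0 n (x : state n) : tnat x = 0 -> x = zero_state n.
Proof.
move/eqP; rewrite sum_nat_eq0 => /forallP x0.
apply: eq_from_tnth => j; rewrite tnth_mktuple.
by move: (x0 j); rewrite muln_eq0 expn_eq0 /= => /eqP; case: (tnth x j).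
Qed.

Lemma cons_zero_state n (b : bool) :
  [tuple of b :: zero_state n] \in [set zero_state n.+1; e0 n.+1].
Proof.
rewrite !inE; apply/orP; case: b; [right | left]; apply/eqP; apply: eq_from_tnth => j;
  rewrite !tnth_mktuple;
  by case: (unliftP ord0 j) => [j' ->|->]; rewrite ?tnthS ?tnth_mktuple.
Qed.

Lemma xor_e0_cons n (b : bool) (x : state n) :
  xor_e0 [tuple of b :: x] = [tuple of ~~ b :: x].
Proof.
apply: eq_from_tnth => j; rewrite !tnth_mktuple.
by case: (unliftP ord0 j) => [j' ->|->]; rewrite ?tnthS /= ?addbT ?addbF.
Qed.

Lemma behead_FSR_F n (f1 : state n.+1 -> bool) (b : bool) (x : state n) (j : 'I_n) :
  tnth (FSR_F f1 [tuple of b :: x]) (widen_ord (leqnSn n) j) = tnth x j.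
Proof. by rewrite tnth_mktuple /= ltnS ltn_ord (tnth_nth false). Qed.

Lemma tnat_FSR_F_cons n (f1 : state n.+1 -> bool) (b : bool) (x : state n) :
  tnat (FSR_F f1 [tuple of b :: x]) = tnat x + 2 ^ n * f1 [tuple of b :: x].
Proof.
rewrite /tnat big_ord_recr /= tnth_mktuple /= ltnn; congr (_ + _).
by apply: eq_bigr => j _; rewrite behead_FSR_F.
Qed.

Lemma nonsingular_f1_flip n (f1 : state n.+1 -> bool) (b : bool) (x : state n) :
  nonsingular f1 -> f1 [tuple of ~~ b :: x] != f1 [tuple of b :: x].
Proof.
move=> /bij_inj F_inj; apply/eqP => f1_eq.
suff /(congr1 (@thead n bool)) : [tuple of ~~ b :: x] = [tuple of b :: x].
  by rewrite !theadE; case: (b).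
apply: F_inj; apply: eq_from_tnth => j; case: (unliftP ord_max j) => [j' ->|->].
  have -> : lift ord_max j' = widen_ord (leqnSn n) j' by apply/val_inj/lift_max.
  by rewrite !behead_FSR_F.
by rewrite !tnth_mktuple /= ltnn f1_eq.
Qed.

Theorem lemma3 (m : nat) (f1 : m.-tuple bool -> bool)
  (s t : int -> bool) (p q : nat) (u : m.-tuple bool) :
  (0 < m)%N ->
  nonsingular f1 ->
  generated f1 s -> least_period s p ->
  generated f1 t -> least_period t q ->
  u \in Omega m s p ->
  xor_e0 u \in Omega m t q ->
  (minval (Omega m s p :|: Omega m t q) < minn (tnat u) (tnat (xor_e0 u)))%N
  \/ u \in [set zero_state m; e0 m].
Proof.
case: m f1 u => [//|n] f1 + _ F_bij s_gen s_per t_gen t_per.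
case/tupleP => b x; rewrite xor_e0_cons => u_in u'_in.
have [z z_in tnat_z] :
    exists2 z, z \in Omega n.+1 s p :|: Omega n.+1 t q & tnat z = tnat x.
  case f1_u: (f1 [tuple of b :: x]).
  - exists (FSR_F f1 [tuple of ~~ b :: x]).
      by rewrite inE (Omega_FSR_F t_gen t_per) ?orbT.
    have := nonsingular_f1_flip b x F_bij; rewrite f1_u eqb_id => /negbTE f1_u'.
    by rewrite tnat_FSR_F_cons f1_u' muln0 addn0.
  - exists (FSR_F f1 [tuple of b :: x]).
      by rewrite inE (Omega_FSR_F s_gen s_per).
    by rewrite tnat_FSR_F_cons f1_u muln0 addn0.
case: (posnP (tnat x)) => [/tnat_eq0 -> | x_gt0]; [right; exact: cons_zero_state | left].
apply: leq_ltn_trans (minval_le z_in) _.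
have lt_x_2x : tnat x < 2 * tnat x by apply: ltn_Pmull.
by rewrite tnat_z leq_min !tnat_cons; apply/andP; split; apply: ltn_addl.
Qed.
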